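(* For any number of features $D$, given $\pi_1=\epsilon$ small, the two positive regions $\mathbb R^D_{++}$ and $-\mathbb R^D_{++}$ are stable for EM. That is, $M(\boldsymbol\lambda)\succ\boldsymbol\lambda$ for all feasible $\boldsymbol\lambda\succ0$, and $M(\boldsymbol\lambda)\prec\boldsymbol\lambda$ for all feasible $\boldsymbol\lambda\prec0$.
   Context: Setting: a mixture of two Bernoullis on $\{0,1\}^D$. - The true distribution is $p^*=\pi_1^*B(\cdot\mid\boldsymbol\mu_1^* )+\pi_2^*B(\cdot\mid\boldsymbol\mu_2^* )$, where $B(\mathbf x\mid\boldsymbol\mu)=\prod_i\mu_i^{x_i}(1-\mu_i)^{1-x_i}$ and $\pi_1^*\in(0,1)$. - It is fitted by population EM to the model $\pi_1B(\cdot\mid\boldsymbol\mu_1)+\pi_2B(\cdot\mid\boldsymbol\mu_2)$. Notation: - $\overline{\mathbf x}=\mathbb E_{p^*}[\mathbf x]$, $S_i=\overline x_i(1-\overline x_i)$ and $\boldsymbol\mu^*=(\boldsymbol\mu_1^*-\boldsymbol\mu_2^* )/2$. - Take $\boldsymbol\mu_2=\overline{\mathbf x}$, set $\mathbf b=\boldsymbol\mu_1-\overline{\mathbf x}$ and $\lambda_i=2S_i^{-1}\mu_i^*b_i$. - The feasible domain is $\{\boldsymbol\lambda(\boldsymbol\mu_1):\boldsymbol\mu_1\in[0,1]^D\}$. - $Z_1(\boldsymbol\lambda)=\pi_1^*\prod_i(1+\pi_2^*\lambda_i)+\pi_2^*\prod_i(1-\pi_1^*\lambda_i)$. - $B_{1i}=\prod_{j\ne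 i}(1+\pi_2^*\lambda_j)$, $B_{2i}=\prod_{j\ne i}(1-\pi_1^*\lambda_j)$, and $\Lambda_i=\mu_{1i}(1-\mu_{1i})$. EM update: - In the one-cluster regime ($\pi_1$ small), the population EM update of $\boldsymbol\mu_1$ is, to leading order, the mean of the normalized distribution proportional to $p^*(\mathbf x)B(\mathbf x\mid\boldsymbol\mu_1)/B(\mathbf x\mid\overline{\mathbf x})$. - $M(\boldsymbol\lambda)$ denotes the image of this updated $\boldsymbol\mu_1$ under the affine map $\boldsymbol\mu_1\mapsto\boldsymbol\lambda$. Explicitly, $$M(\boldsymbol\lambda)_i=\lambda_i+(2S_i^{-1}\mu_i^* )^2\pi_1^*\pi_2^*\frac{\Lambda_i}{Z_1(\boldsymbol\lambda)}(B_{1i}-B_{2i}).$$ $\succ$ and $\prec$ denote strict componentwise order. Standing assumption: $\sigma_{ij}=4\pi_1^*\pi_2^*\mu_i^*\mu_j^*\ne0$ for all $i\ne j$. *)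

(* Mixture of two Bernoullis on {0,1}^D, one-cluster EM map. *)
From mathcomp Require Import all_boot all_order all_algebra.
Set Implicit Arguments. Unset Strict Implicit. Unset Printing Implicit Defensive.
Import Order.TTheory GRing.Theory Num.Theory.
Local Open Scope ring_scope.

Section EM.
Variables (R : realFieldType) (D : nat).
(* true parameters: pi1 = pi_1^*, pi2 = pi_2^* = 1 - pi1, m1 = mu_1^*, m2 = mu_2^* *)
Variables (pi1 : R) (m1 m2 : 'I_D -> R).

Definition pi2 : R := 1 - pi1.
Definition xbar (i : 'I_D) : R := pi1 * m1 i + pi2 * m2 i.
Definition Svar (i : 'I_D) : R := xbar i * (1 - xbar i).
Definition mustar (i : 'I_D) : R := (m1 i - m2 i) / 2.
Definition sigma (i j : 'I_D) : R := 4 * pi1 * pi2 * mustar i * mustar j.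

Definition lam (mu1 : 'I_D -> R) (i : 'I_D) : R :=
  2 * (Svar i)^-1 * mustar i * (mu1 i - xbar i).

Definition Z1 (l : 'I_D -> R) : R :=
  pi1 * \prod_(j < D) (1 + pi2 * l j) + pi2 * \prod_(j < D) (1 - pi1 * l j).
Definition B1 (l : 'I_D -> R) (i : 'I_D) : R :=
  \prod_(j < D | j != i) (1 + pi2 * l j).
Definition B2 (l : 'I_D -> R) (i : 'I_D) : R :=
  \prod_(j < D | j != i) (1 - pi1 * l j).
Definition Lam (mu1 : 'I_D -> R) (i : 'I_D) : R := mu1 i * (1 - mu1 i).

(* M(lambda) where lambda = lam mu1 (Lambda_i depends on mu1) *)
Definition Mmap (mu1 : 'I_D -> R) (i : 'I_D) : R :=
  let l := lam mu1 in
  l i + (2 * (Svar i)^-1 * mustar i) ^+ 2 * pi1 * pi2 * (Lam mu1 i / Z1 l)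
        * (B1 l i - B2 l i).
End EM.

(** On the feasible domain the factors [1 + pi2 lambda_j] and [1 - pi1 lambda_j]
    are positive: [S_j (1 + q lambda_j)] is a positive combination of [m] and
    [1 - m], where [m = xbar_j + q (mu_1^*_j - mu_2^*_j)] is [mu_1^*_j] for
    [q = pi2] and [mu_2^*_j] for [q = -pi1].  Hence [Z_1 > 0], and the EM step
    moves [lambda_i] by a positive multiple of [B_1i - B_2i].  Since the two
    factors differ by exactly [lambda_j], for [lambda > 0] every factor of [B_2i]
    is smaller than the corresponding factor of [B_1i], so [B_2i < B_1i] as soon
    as the products over [j <> i] are nonempty, i.e. [D >= 2]; the case
    [lambda < 0] is symmetric. *)

From mathcomp Require Import all_boot all_order all_algebra.
From mathcomp Require Import ring lra.
Import Order.TTheory GRing.Theory Num.Theory.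
Local Open Scope ring_scope.

Lemma has_neq_ord (D : nat) (i : 'I_D) :
  (1 < D)%N -> has (fun j => j != i) (index_enum 'I_D).
Proof.
move=> D_gt1; have : (0 < #|predC1 i|)%N by rewrite cardC1 card_ord -subn1 subn_gt0.
by case/card_gt0P=> j ji; apply/hasP; exists j; rewrite ?mem_index_enum.
Qed.

Lemma pos_combination_gt0 (R : realFieldType) (mu x m : R) :
  0 < mu < 1 -> 0 < x < 1 -> 0 <= m <= 1 ->
  0 < mu * (1 - x) * m + (1 - mu) * x * (1 - m).
Proof.
move=> /andP[mu0 mu1] /andP[x0 x1] /andP[m0 m1].
have a_gt0 : 0 < mu * (1 - x) by rewrite mulr_gt0 ?subr_gt0.
have b_gt0 : 0 < (1 - mu) * x by rewrite mulr_gt0 ?subr_gt0.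
have [m_gt0 | m_le0] := ltrP 0 m.
  by apply: ltr_wpDr; [rewrite mulr_ge0 ?subr_ge0 ?(ltW b_gt0) | rewrite mulr_gt0].
have -> : m = 0 by apply/le_anti; rewrite m_le0 m0.
by rewrite mulr0 subr0 mulr1 add0r.
Qed.

Lemma factor1_sub_factor2 (R : realFieldType) (p l : R) :
  (1 + pi2 p * l) - (1 - p * l) = l.
Proof. by rewrite /pi2; ring. Qed.

Section EMStep.
Variables (R : realFieldType) (D : nat) (pi1 : R) (m1 m2 mu1 : 'I_D -> R).
Hypothesis pi1_01 : 0 < pi1 < 1.
Hypothesis m1_01 : forall i, 0 <= m1 i <= 1.
Hypothesis m2_01 : forall i, 0 <= m2 i <= 1.
Hypothesis mu1_01 : forall i, 0 < mu1 i < 1.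

Local Notation lam := (lam pi1 m1 m2 mu1).
Local Notation xbar := (xbar pi1 m1 m2).
Local Notation Svar := (Svar pi1 m1 m2).

Lemma pi2_gt0 : 0 < pi2 pi1.
Proof. by rewrite subr_gt0; case/andP: pi1_01. Qed.

Lemma xbar_01 i : 0 <= xbar i <= 1.
Proof.
rewrite /xbar /pi2; case/andP: pi1_01 (m1_01 i) (m2_01 i).
by move=> ? ? /andP[? ?] /andP[? ?]; apply/andP; split; nra.
Qed.

Lemma Svar_mul_lam_factor (q : R) i : Svar i != 0 ->
  Svar i * (1 + q * lam i) =
    mu1 i * (1 - xbar i) * (xbar i + q * (m1 i - m2 i))
    + (1 - mu1 i) * xbar i * (1 - (xbar i + q * (m1 i - m2 i))).
Proof.
rewrite /lam /mustar /Svar mulf_eq0 negb_or => /andP[x_neq0 x1_neq0].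
by field; rewrite x_neq0 x1_neq0.
Qed.

Lemma lam_factor_gt0 (q : R) i :
  0 <= xbar i + q * (m1 i - m2 i) <= 1 -> 0 < 1 + q * lam i.
Proof.
move=> m_01; have [S0 | S_neq0] := eqVneq (Svar i) 0.
  (* then [lam i = 0], because [0^-1 = 0] *)
  by rewrite /lam -/(Svar i) S0 invr0 !(mulr0, mul0r) addr0 ltr01.
have /andP[x0 x1] := xbar_01 i.
have S_gt0 : 0 < Svar i by rewrite lt_neqAle eq_sym S_neq0 mulr_ge0 ?subr_ge0.
have x_01 : 0 < xbar i < 1.
  apply/andP; split; rewrite lt_neqAle ?x0 ?x1 ?andbT; apply: contraNneq S_neq0.
    by rewrite /Svar => <-; rewrite mul0r.
  by rewrite /Svar => ->; rewrite subrr mulr0.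
rewrite -(pmulr_rgt0 _ S_gt0) Svar_mul_lam_factor //.
exact: pos_combination_gt0.
Qed.

Lemma lam_factor1_gt0 i : 0 < 1 + pi2 pi1 * lam i.
Proof.
by apply: lam_factor_gt0; rewrite /xbar /pi2 (_ : _ + _ = m1 i) //; ring.
Qed.

Lemma lam_factor2_gt0 i : 0 < 1 - pi1 * lam i.
Proof.
rewrite -mulNr; apply: lam_factor_gt0.
by rewrite /xbar /pi2 (_ : _ + _ = m2 i) //; ring.
Qed.

Lemma Z1_gt0 : 0 < Z1 pi1 lam.
Proof.
have /andP[pi1_gt0 _] := pi1_01.
have B1_gt0 : 0 < \prod_(j < D) (1 + pi2 pi1 * lam j).
  by apply: prodr_gt0 => j _; apply: lam_factor1_gt0.
have B2_gt0 : 0 < \prod_(j < D) (1 - pi1 * lam j).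
  by apply: prodr_gt0 => j _; apply: lam_factor2_gt0.
by rewrite addr_gt0 ?mulr_gt0 ?pi2_gt0.
Qed.

Definition em_gain i : R :=
  (2 * (Svar i)^-1 * mustar m1 m2 i) ^+ 2 * pi1 * pi2 pi1 * (Lam mu1 i / Z1 pi1 lam).

Lemma MmapE i : Mmap pi1 m1 m2 mu1 i = lam i + em_gain i * (B1 pi1 lam i - B2 pi1 lam i).
Proof. by []. Qed.

Lemma em_gain_gt0 i : lam i != 0 -> 0 < em_gain i.
Proof.
move=> lam_neq0; have /andP[pi1_gt0 _] := pi1_01; have /andP[mu_gt0 mu_lt1] := mu1_01 i.
have c_neq0 : 2 * (Svar i)^-1 * mustar m1 m2 i != 0.
  by apply: contraNneq lam_neq0; rewrite /lam => ->; rewrite mul0r.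
have Lam_gt0 : 0 < Lam mu1 i by rewrite mulr_gt0 ?subr_gt0.
have c2_gt0 : 0 < (2 * (Svar i)^-1 * mustar m1 m2 i) ^+ 2.
  by rewrite exprn_even_gt0 // c_neq0 orbT.
exact: mulr_gt0 (mulr_gt0 (mulr_gt0 c2_gt0 pi1_gt0) pi2_gt0) (divr_gt0 Lam_gt0 Z1_gt0).
Qed.

Lemma lam_lt_Mmap i : lam i != 0 ->
  (lam i < Mmap pi1 m1 m2 mu1 i) = (B2 pi1 lam i < B1 pi1 lam i).
Proof. by move=> lam_neq0; rewrite MmapE ltrDl pmulr_rgt0 ?em_gain_gt0 // subr_gt0. Qed.

Lemma Mmap_lt_lam i : lam i != 0 ->
  (Mmap pi1 m1 m2 mu1 i < lam i) = (B1 pi1 lam i < B2 pi1 lam i).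
Proof. by move=> lam_neq0; rewrite MmapE gtrDl pmulr_rlt0 ?em_gain_gt0 // subr_lt0. Qed.

End EMStep.

Theorem mainTheorem6 (R : realFieldType) (D : nat) (pi1 : R) (m1 m2 : 'I_D -> R) :
  (2 <= D)%N ->
  0 < pi1 < 1 ->
  (forall i, 0 <= m1 i <= 1) ->
  (forall i, 0 <= m2 i <= 1) ->
  (forall i j : 'I_D, i != j -> sigma pi1 m1 m2 i j != 0) ->
  forall mu1 : 'I_D -> R, (forall i, 0 < mu1 i < 1) ->
    ((forall i, 0 < lam pi1 m1 m2 mu1 i) ->
       forall i, lam pi1 m1 m2 mu1 i < Mmap pi1 m1 m2 mu1 i) /\
    ((forall i, lam pi1 m1 m2 mu1 i < 0) ->
       forall i, Mmap pi1 m1 m2 mu1 i < lam pi1 m1 m2 mu1 i).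
Proof.
move=> D_ge2 pi1_01 m1_01 m2_01 _ mu1 mu1_01.
split=> [lam_gt0 | lam_lt0] i.
- rewrite lam_lt_Mmap ?lt0r_neq0 ?lam_gt0 //; apply: ltr_prod; first exact: has_neq_ord.
  by move=> j _; rewrite ltW ?lam_factor2_gt0 //= -subr_gt0 factor1_sub_factor2.
- rewrite Mmap_lt_lam ?ltr0_neq0 ?lam_lt0 //; apply: ltr_prod; first exact: has_neq_ord.
  by move=> j _; rewrite ltW ?lam_factor1_gt0 //= -subr_lt0 factor1_sub_factor2.
Qed.
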